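(* For every real $r\ge1$ and every $x\in[0,1]$, \[ \sum_{m\ge0}s_m(x)^r\ \ge\ \sum_{m\ge0}s_m(\tfrac12)^r, \] where $s_m(\tfrac12)=\frac{8}{\pi^2(2m+1)^2}$.
   Context: For $y\in\mathbb{R}$ let $\operatorname{sinc}(y)=\frac{\sin y}{y}$ for $y\neq0$ and $\operatorname{sinc}(0)=1$, and let $h(y)=\operatorname{sinc}^2(\pi y)$. For integers $m\ge0$, $s_m(x)=h(x+m)+h(x-(m+1))$. *)

From HB Require Import structures.
From mathcomp Require Import all_boot all_order all_algebra.
From mathcomp Require Import all_classical all_reals all_analysis.
Set Implicit Arguments. Unset Strict Implicit. Unset Printing Implicit Defensive.
Import Order.TTheory GRing.Theory Num.Theory.
Local Open Scope ring_scope.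

Definition sinc_fn {R : realType} (y : R) : R := if y == 0 then 1 else sin y / y.

Definition h_fn {R : realType} (y : R) : R := (sinc_fn (pi * y)) ^+ 2.

Definition s_fn {R : realType} (m : nat) (x : R) : R :=
  h_fn (x + m%:R) + h_fn (x - (m%:R + 1)).

From HB Require Import structures.
From mathcomp Require Import all_boot all_order all_algebra.
From mathcomp Require Import all_classical all_reals all_analysis.
From mathcomp Require Import ring lra.
Set Implicit Arguments.
Unset Strict Implicit.
Unset Printing Implicit Defensive.
Import Order.TTheory GRing.Theory Num.Theory.
Local Open Scope ring_scope.

(* For 0 < x < 1 the numbers s_m(x) regroup the series
   sum_(n in Z) sinc^2 (pi (x + n)) = 1, so they sum to 1; we obtain this from
   the dyadic identity sum_(j < 2^n) csc^2 (t + j pi / 2^n) = 4^n csc^2 (2^n t)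
   together with csc^2 u = u^-2 + O(1) near 0.  For m >= 1 the term s_m(x) is
   largest at x = 1/2, so the tails of (s_m(1/2)) dominate those of (s_m(x))
   and, the totals being equal, every partial sum of (s_m(1/2)) is at most the
   corresponding partial sum of (s_m(x)).  As (s_m(1/2)) is maximal at m = 0,
   the tangent line of t^r at s_0(1/2) turns this into the inequality between
   sums of r-th powers. *)

Lemma lee_nneseries_psum (R : realType) (u v : nat -> R) :
  (forall n, 0 <= u n) -> (forall n, 0 <= v n) ->
  (forall N, \sum_(0 <= k < N) u k <= \sum_(0 <= k < N) v k) ->
  (\sum_(0 <= k <oo) (u k)%:E <= \sum_(0 <= k <oo) (v k)%:E)%E.
Proof.
move=> u_ge0 v_ge0 uv.
apply: lee_lim; try by apply: is_cvg_nneseries => n _ _; rewrite lee_fin.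
by apply: nearW => N /=; rewrite !sumEFin lee_fin.
Qed.

Section PowerConvexity.
Variable R : realType.
Implicit Types (r y c : R).

(* Young's inequality [a b <= a^r / r + b^q / q] with [b = c^(r-1)]. *)
Lemma powR_ge_tangent r y c : 1 <= r -> 0 <= y -> 0 <= c ->
  c `^ r + r * c `^ (r - 1) * (y - c) <= y `^ r.
Proof.
move=> r_ge1 y_ge0 c_ge0; have [->|r_neq1] := eqVneq r 1.
  by rewrite subrr powRr0 !powRr1 // !mul1r addrC subrK.
have r_gt1 : 1 < r by rewrite lt_neqAle eq_sym r_neq1 r_ge1.
have r_gt0 : 0 < r by lra.
pose q := r / (r - 1).
have q_gt0 : 0 < q by rewrite divr_gt0 //; lra.
have pq : r^-1 + q^-1 = 1 by rewrite /q invf_div; field; rewrite gt_eqF //; lra.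
have := conjugate_powR y_ge0 (powR_ge0 c (r - 1)) r_gt0 q_gt0 pq.
rewrite -powRrM /q (mulrC (r - 1)) divfK ?gt_eqF ?subr_gt0 // => young.
have := ler_wpM2l (ltW r_gt0) young.
rewrite (_ : r * (y `^ r / r + c `^ r / (r / (r - 1))) = y `^ r + (r - 1) * c `^ r).
  by rewrite -(mulr_powRB1 c_ge0 r_gt0); nra.
by field; rewrite !gt_eqF //; lra.
Qed.

(* Tangent-line argument at [b 0]: for [m >= 1] the slope [r b_m^(r-1)] is at
   most [r b_0^(r-1)] while [a m - b m <= 0]. *)
Lemma ler_sum_powR_head (r : R) (a b : nat -> R) (N : nat) : 1 <= r ->
  (forall m, 0 <= a m) -> (forall m, 0 <= b m) ->
  (forall m, (1 <= m)%N -> a m <= b m) -> (forall m, b m <= b 0%N) ->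
  \sum_(0 <= m < N) b m <= \sum_(0 <= m < N) a m ->
  \sum_(0 <= m < N) b m `^ r <= \sum_(0 <= m < N) a m `^ r.
Proof.
move=> r_ge1 a_ge0 b_ge0 ab b_le0 sum_ba.
pose w := r * b 0%N `^ (r - 1).
have w_ge0 : 0 <= w by rewrite mulr_ge0 ?powR_ge0 //; lra.
have tangent m : b m `^ r + w * (a m - b m) <= a m `^ r.
  case: m => [|m]; first exact: powR_ge_tangent.
  apply: le_trans (powR_ge_tangent r_ge1 (a_ge0 m.+1) (b_ge0 m.+1)).
  rewrite lerD2l /w -!mulrA; apply: ler_wpM2l; first lra.
  have ab_le0 : a m.+1 - b m.+1 <= 0 by rewrite subr_le0 ab.
  rewrite -[X in _ <= X]opprK -[X in X <= _]opprK lerN2 -!mulrN.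
  apply: ler_wpM2r; first by rewrite oppr_ge0.
  by apply: ge0_ler_powR; rewrite ?nnegrE ?b_ge0 //; lra.
have := ler_sum_nat (fun m (_ : (0 <= m < N)%N) => tangent m).
rewrite big_split /= -mulr_sumr sumrB.
have : 0 <= w * (\sum_(0 <= m < N) a m - \sum_(0 <= m < N) b m).
  by rewrite mulr_ge0 // subr_ge0.
lra.
Qed.

End PowerConvexity.

Section SineBounds.
Variable R : realType.

Lemma ge0_derive_le_from0 {F dF : R -> R} {t : R} :
  (forall s, is_derive s (1:R) F (dF s)) -> (forall s, 0 <= s -> 0 <= dF s) ->
  0 <= t -> F 0 <= F t.
Proof.
move=> dFE dF_ge0 t0.
apply: (@ger0_derive1_ndecr _ F 0 t) => //.
- move=> s; rewrite in_itv /= => /andP[s0 _].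
  by rewrite derive1E (@derive_val _ _ _ _ _ _ _ (dFE s)) dF_ge0 // ltW.
- apply: derivable_within_continuous => s _.
  exact: (@ex_derive _ _ _ _ _ _ _ (dFE s)).
Qed.

Lemma sin_le_id (t : R) : 0 <= t -> sin t <= t.
Proof.
move=> t0; rewrite -subr_ge0.
have D (s : R) : is_derive s (1 : R) (id - sin : R -> R) (1 - cos s) by exact: is_derive_eq.
have := ge0_derive_le_from0 D _ t0; rewrite !fctE sin0 subrr; apply=> s _.
by rewrite subr_ge0 cos_le1.
Qed.

Lemma cos_ge_taylor (t : R) : 0 <= t -> 1 - t ^+ 2 / 2 <= cos t.
Proof.
move=> t0; rewrite -subr_ge0.
have D (s : R) :
    is_derive s (1 : R) (cos - cst 1 + cst (2^-1) * (id * id) : R -> R) (s - sin s).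
  apply: is_derive_eq; rewrite scaler0 addr0 subr0 /cst -scalerDl.
  rewrite -[_ *: _]/(2^-1 * ((s + s) * 1)); lra.
have dF_ge0 (s : R) : 0 <= s -> 0 <= s - sin s by move=> s0; rewrite subr_ge0; exact: sin_le_id.
have := ge0_derive_le_from0 D dF_ge0 t0.
rewrite !fctE cos0 subrr mul0r mulr0 addr0 expr2; lra.
Qed.

Lemma sin_ge_taylor (t : R) : 0 <= t -> t - t ^+ 3 / 6 <= sin t.
Proof.
move=> t0; rewrite -subr_ge0.
have D (s : R) : is_derive s (1 : R) (sin - id + cst (6^-1) * (id * id * id) : R -> R)
    (cos s - 1 + s ^+ 2 / 2).
  apply: is_derive_eq; rewrite scaler0 addr0 /cst.
  by rewrite -[6^-1 *: _]/(6^-1 * ((s * s) * 1 + s * ((s * 1) + (s * 1)))); field.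
have dF_ge0 (s : R) : 0 <= s -> 0 <= cos s - 1 + s ^+ 2 / 2 by move=> /cos_ge_taylor; lra.
have := ge0_derive_le_from0 D dF_ge0 t0.
rewrite !fctE sin0 subrr !mul0r mulr0 addr0 (_ : t ^+ 3 = t * t * t); first lra.
by rewrite !exprS expr0 mulr1 mulrA.
Qed.

Lemma sqr_sin_bounds (t : R) : `|t| <= 2 ->
  t ^+ 2 * (1 - t ^+ 2 / 6) ^+ 2 <= sin t ^+ 2 <= t ^+ 2.
Proof.
wlog t0 : t / 0 <= t.
  move=> wlog_t; have [|t_lt0] := leP 0 t; first exact: wlog_t.
  by have := wlog_t (- t); rewrite sinN !sqrrN normrN; apply; rewrite oppr_ge0 ltW.
rewrite ger0_norm // => t2.
have sin_ge0 : 0 <= sin t by apply: sin_ge0_pi; rewrite t0 (le_trans t2) ?pi_ge2.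
have taylor_ge0 : 0 <= t - t ^+ 3 / 6.
  have : t ^+ 2 <= 2 ^+ 2 by rewrite ler_sqr ?nnegrE.
  rewrite !exprS expr0 !mulr1; nra.
have -> : t ^+ 2 * (1 - t ^+ 2 / 6) ^+ 2 = (t - t ^+ 3 / 6) ^+ 2.
  by rewrite -exprMn; congr (_ ^+ 2); rewrite exprS; ring.
by rewrite !ler_sqr ?nnegrE // sin_le_id // sin_ge_taylor.
Qed.

Lemma inv_sqr_sin_bounds (t : R) : t != 0 -> `|t| <= 2 ->
  (t ^+ 2)^-1 <= (sin t ^+ 2)^-1 <= (t ^+ 2)^-1 + 2.
Proof.
move=> t_neq0 t2; have /andP[lo hi] := sqr_sin_bounds t2.
have y_gt0 : 0 < t ^+ 2 by rewrite exprn_even_gt0.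
have y_le4 : t ^+ 2 <= 4.
  by rewrite -real_normK ?num_real // (_ : 4 = 2 ^+ 2) ?ler_sqr ?nnegrE //; lra.
set y := t ^+ 2 in y_gt0 y_le4 lo hi *.
have q_gt0 : 0 < y * (1 - y / 6) ^+ 2 by rewrite mulr_gt0 // exprn_gt0 //; lra.
have s2_gt0 : 0 < sin t ^+ 2 by apply: lt_le_trans lo.
rewrite lef_pV2 ?posrE //= hi.
apply: le_trans (_ : (y * (1 - y / 6) ^+ 2)^-1 <= _); first by rewrite lef_pV2 ?posrE.
rewrite -div1r ler_pdivrMr // mulrDl mulKf ?gt_eqF // !exprS expr0 !mulr1.
have : 0 <= y * ((4 - y) * (15 - 2 * y)) by apply: mulr_ge0; [lra | apply: mulr_ge0; lra].
nra.
Qed.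

End SineBounds.

Section DyadicCosecant.
Variable R : realType.

Lemma sin_mul2 (z : R) : sin (2 * z) = 2 * sin z * cos z.
Proof. by rewrite mulr_natl sin_mulr2n; ring. Qed.

Lemma sin_neq0_dyadic (n : nat) (z : R) : sin (2 ^+ n * z) != 0 -> sin z != 0.
Proof.
elim: n z => [|n IHn] z; first by rewrite expr0 mul1r.
rewrite exprSr -mulrA => /IHn; rewrite sin_mul2 !mulf_eq0 !negb_or.
by case/andP => /andP[].
Qed.

Lemma sinD_natpi (b : R) (i : nat) : sin (b + i%:R * pi) = (-1) ^+ i * sin b.
Proof. by rewrite mulr_natl (alternatingn (@sinDpi R)). Qed.

Lemma sqr_sinD_natpi (b : R) (i : nat) : sin (b + i%:R * pi) ^+ 2 = sin b ^+ 2.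
Proof. by rewrite sinD_natpi exprMn sqrr_sign mul1r. Qed.

Lemma inv_sqr_sin_pihalf_pair (a : R) : sin (2 * a) != 0 ->
  (sin a ^+ 2)^-1 + (sin (a + pi / 2) ^+ 2)^-1 = 4 / sin (2 * a) ^+ 2.
Proof.
rewrite sinDpihalf sin_mul2 !mulf_eq0 !negb_or => /andP[/andP[_ sa] ca].
have -> : (sin a ^+ 2)^-1 + (cos a ^+ 2)^-1
    = (cos a ^+ 2 + sin a ^+ 2) / (sin a ^+ 2 * cos a ^+ 2).
  by field; rewrite ca sa.
by rewrite cos2Dsin2; field; rewrite ca sa.
Qed.

(* Halving [th] groups the 2^(n+1) nodes into pairs [a], [a + pi/2], to which
   [inv_sqr_sin_pihalf_pair] applies. *)
Lemma sum_inv_sqr_sin_dyadic (n : nat) (th : R) : sin (2 ^+ n * th) != 0 ->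
  \sum_(j < 2 ^ n) (sin (th + j%:R * pi / 2 ^+ n) ^+ 2)^-1
    = 4 ^+ n / sin (2 ^+ n * th) ^+ 2.
Proof.
have exp2_neq0 k : (2 : R) ^+ k != 0 by rewrite expf_neq0 // pnatr_eq0.
elim: n th => [|n IHn] th sin_neq0.
  by rewrite big_ord1 !expr0 /= !mul0r addr0 !mul1r.
rewrite expnS mul2n -addnn big_split_ord /= -big_split /=.
have sin2_neq0 : sin (2 ^+ n * (2 * th)) != 0 by rewrite mulrA -exprSr.
rewrite (eq_bigr (fun j : 'I_(2 ^ n) =>
  4 * (sin (2 * th + (j : nat)%:R * pi / 2 ^+ n) ^+ 2)^-1)) => [|j _].
  by rewrite -mulr_sumr IHn // mulrA -exprS mulrA -exprSr.
set a := th + (j : nat)%:R * pi / 2 ^+ n.+1.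
have -> : th + (2 ^ n + j)%:R * pi / 2 ^+ n.+1 = a + pi / 2.
  by rewrite /a natrD natrX exprS; field; rewrite exp2_neq0.
have -> : 2 * th + (j : nat)%:R * pi / 2 ^+ n = 2 * a.
  by rewrite /a exprS; field; rewrite exp2_neq0.
rewrite inv_sqr_sin_pihalf_pair //; apply: (sin_neq0_dyadic (n := n)).
have -> : 2 ^+ n * (2 * a) = 2 ^+ n.+1 * th + (j : nat)%:R * pi.
  by rewrite /a exprS; field; rewrite exp2_neq0.
by rewrite sinD_natpi mulf_neq0 // signr_eq0.
Qed.

End DyadicCosecant.

Section SincSquares.
Variable R : realType.
Implicit Types (x y : R) (m n : nat).

Let pi_neq0 : (pi : R) != 0. Proof. by rewrite gt_eqF // pi_gt0. Qed.

Lemma h_fnE y : y != 0 -> h_fn y = sin (pi * y) ^+ 2 / (pi ^+ 2 * y ^+ 2).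
Proof.
move=> y_neq0; rewrite /h_fn /sinc_fn mulf_eq0 (negbTE pi_neq0) (negbTE y_neq0).
by rewrite expr_div_n exprMn.
Qed.

Lemma h_fnN y : h_fn (- y) = h_fn y.
Proof.
rewrite /h_fn /sinc_fn mulrN oppr_eq0; case: ifP => // _.
by rewrite sinN invrN mulrNN.
Qed.

Lemma h_fn_nat n : h_fn (n%:R : R) = (n == 0)%:R.
Proof.
case: n => [|n]; first by rewrite /h_fn /sinc_fn mulr0 eqxx expr1n.
rewrite h_fnE ?pnatr_eq0 // (mulrC pi) -[_ * pi]add0r sinD_natpi sin0 mulr0.
by rewrite expr0n mul0r.
Qed.

Lemma s_fn_ge0 m x : 0 <= s_fn m x.
Proof. by rewrite /s_fn /h_fn addr_ge0 ?sqr_ge0. Qed.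

Lemma s_fn_endpoint m x : x = 0 \/ x = 1 -> s_fn m x = (m == 0)%:R.
Proof.
rewrite /s_fn => -[] ->.
  by rewrite add0r sub0r h_fnN natr1 !h_fn_nat /= addr0.
rewrite (_ : 1 - (m%:R + 1) = - m%:R :> R); last by ring.
by rewrite (addrC 1) natr1 h_fnN !h_fn_nat /= add0r.
Qed.

Lemma s_fnE m x : 0 < x < 1 -> s_fn m x
  = sin (pi * x) ^+ 2 / pi ^+ 2 * (((x + m%:R) ^+ 2)^-1 + ((x - (m%:R + 1)) ^+ 2)^-1).
Proof.
move=> /andP[x_gt0 x_lt1].
have y1_neq0 : x + m%:R != 0 by rewrite gt_eqF // ltr_wpDr.
have y2_neq0 : x - (m%:R + 1) != 0 by rewrite lt_eqF // subr_lt0 ltr_wpDl.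
rewrite /s_fn !h_fnE //.
have -> : sin (pi * (x - (m%:R + 1))) ^+ 2 = sin (pi * x) ^+ 2.
  by rewrite -(sqr_sinD_natpi _ m.+1) -natr1; congr (sin _ ^+ 2); ring.
by rewrite mulrDr (mulrC pi m%:R) sqr_sinD_natpi !invfM; ring.
Qed.

Lemma s_fn_half m : s_fn m (2^-1 : R) = 8 / (pi ^+ 2 * (2 * m%:R + 1) ^+ 2).
Proof.
rewrite s_fnE; last by apply/andP; split; lra.
rewrite sin_pihalf expr1n.
have m_neq0 : (2 * m%:R + 1 : R) != 0 by rewrite gt_eqF //; have := ler0n R m; lra.
rewrite (_ : 2^-1 + m%:R = (2 * m%:R + 1) / 2); last by field.
rewrite (_ : 2^-1 - (m%:R + 1) = - ((2 * m%:R + 1) / 2)) ?sqrrN; last by field.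
by move: pi_neq0; generalize (@pi R) => p p_neq0; field; rewrite m_neq0 p_neq0.
Qed.

Lemma s_fn_half_le_head m : s_fn m (2^-1 : R) <= s_fn 0 (2^-1).
Proof.
have pi2_gt0 : 0 < pi ^+ 2 :> R by rewrite exprn_gt0 // pi_gt0.
have odd_ge1 : 1 <= 2 * m%:R + 1 :> R by rewrite lerDr mulr_ge0.
rewrite !s_fn_half mulr0 add0r expr1n mulr1 ler_pM2l // lef_pV2 ?posrE //.
  by rewrite ler_pMr // exprn_ege1.
by rewrite mulr_gt0 // exprn_gt0 // (lt_le_trans _ odd_ge1).
Qed.

End SincSquares.

Section PartialSumsNearOne.
Variable R : realType.
Implicit Types (x y K : R) (m n : nat).

Lemma inv_sqr_sin_scaled_bounds y K : 0 < K -> y != 0 -> `|y| * 2 <= K ->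
  (pi ^+ 2 * y ^+ 2)^-1 <= (K ^+ 2)^-1 * (sin (pi * y / K) ^+ 2)^-1
                        <= (pi ^+ 2 * y ^+ 2)^-1 + 2 / K ^+ 2.
Proof.
move=> K_gt0 y_neq0 yK; have pi_gt0 := @pi_gt0 R.
have t_neq0 : pi * y / K != 0 by rewrite !mulf_eq0 !negb_or invr_eq0 y_neq0 !gt_eqF.
have t_le2 : `|pi * y / K| <= 2.
  rewrite !normrM normfV (gtr0_norm pi_gt0) (gtr0_norm K_gt0) ler_pdivrMr //.
  have := pihalf_lt2 R; have := normr_ge0 y; nra.
have /andP[lo hi] := inv_sqr_sin_bounds t_neq0 t_le2.
have K2_gt0 : 0 < (K ^+ 2)^-1 by rewrite invr_gt0 exprn_gt0.
have scaleE : (K ^+ 2)^-1 * ((pi * y / K) ^+ 2)^-1 = (pi ^+ 2 * y ^+ 2)^-1.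
  move: (gt_eqF pi_gt0); generalize (@pi R) => p p_neq0.
  by field; rewrite y_neq0 p_neq0 gt_eqF.
rewrite -scaleE !ler_pM2l //= lo /=.
by rewrite (le_trans (ler_wpM2l (ltW K2_gt0) hi)) // mulrDr (mulrC _ 2).
Qed.

Definition csc2_pair n m x : R :=
  (sin (pi * (x + m%:R) / 2 ^+ n.+1) ^+ 2)^-1
  + (sin (pi * (x - (m%:R + 1)) / 2 ^+ n.+1) ^+ 2)^-1.

(* The nodes [x + j] and [x - (j + 1)] (j < 2^n) fill one period of
   [csc^2 (pi t / 2^(n+1))]. *)
Lemma sum_csc2_pair n x : 0 < x < 1 ->
  sin (pi * x) ^+ 2 / (2 ^+ n.+1) ^+ 2 * \sum_(m < 2 ^ n) csc2_pair n m x = 1.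
Proof.
move=> /andP[x_gt0 x_lt1]; rewrite /csc2_pair; set K : R := 2 ^+ n.+1.
have K_neq0 : K != 0 by rewrite expf_neq0 // pnatr_eq0.
have sin_gt0 : 0 < sin (pi * x).
  by apply: sin_gt0_pi; rewrite mulr_gt0 ?pi_gt0 //= gtr_pMr ?pi_gt0.
have := @sum_inv_sqr_sin_dyadic R n.+1 (pi * x / K).
rewrite (_ : 2 ^+ n.+1 * (pi * x / K) = pi * x); last by rewrite -/K; field.
move=> /(_ (lt0r_neq0 sin_gt0)).
rewrite expnS mul2n -addnn big_split_ord /= -/K.
rewrite [X in _ + X](reindex_inj rev_ord_inj) /= -big_split /= => sumE.
rewrite [X in _ * X](_ : _ = 4 ^+ n.+1 / sin (pi * x) ^+ 2).
  rewrite (_ : 4 ^+ n.+1 = K ^+ 2); last first.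
    by rewrite /K -exprM mulnC exprM; congr (_ ^+ _); ring.
  by field; rewrite K_neq0 (lt0r_neq0 sin_gt0).
rewrite -sumE; apply: eq_bigr => j _; congr (_ + _).
  by congr (sin _ ^- 2); ring.
rewrite -(sqr_sinD_natpi _ 1); congr (sin _ ^- 2).
rewrite natrD natrB ?ltn_ord // natrX -natr1 /K exprS.
by field; rewrite expf_neq0 // pnatr_eq0.
Qed.

Lemma s_fn_csc2_pair_bounds n m x : 0 < x < 1 -> (m < 2 ^ n)%N ->
  s_fn m x <= sin (pi * x) ^+ 2 / (2 ^+ n.+1) ^+ 2 * csc2_pair n m x
           <= s_fn m x + 4 / (2 ^+ n.+1) ^+ 2.
Proof.
move=> x01 m_lt; have /andP[x_gt0 x_lt1] := x01.
rewrite s_fnE // /csc2_pair; set K : R := 2 ^+ n.+1; set c := sin (pi * x) ^+ 2.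
have K_gt0 : 0 < K by rewrite exprn_gt0.
have c01 : 0 <= c <= 1.
  by rewrite sqr_ge0 /c -real_normK ?num_real // exprn_ile1 ?sin_max.
have mK : (m%:R + 1) * 2 <= K by rewrite /K exprSr ler_pM2r // natr1 -natrX ler_nat.
have /andP[lo1 hi1] : (pi ^+ 2 * (x + m%:R) ^+ 2)^-1
    <= (K ^+ 2)^-1 * (sin (pi * (x + m%:R) / K) ^+ 2)^-1
    <= (pi ^+ 2 * (x + m%:R) ^+ 2)^-1 + 2 / K ^+ 2.
  apply: inv_sqr_sin_scaled_bounds; rewrite ?gt_eqF ?ltr_wpDr //.
  by rewrite gtr0_norm ?ltr_wpDr // (le_trans _ mK) // ler_pM2r //; lra.
have /andP[lo2 hi2] : (pi ^+ 2 * (x - (m%:R + 1)) ^+ 2)^-1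
    <= (K ^+ 2)^-1 * (sin (pi * (x - (m%:R + 1)) / K) ^+ 2)^-1
    <= (pi ^+ 2 * (x - (m%:R + 1)) ^+ 2)^-1 + 2 / K ^+ 2.
  apply: inv_sqr_sin_scaled_bounds; rewrite ?lt_eqF ?subr_lt0 ?ltr_wpDl //.
  by rewrite ltr0_norm ?subr_lt0 ?ltr_wpDl // (le_trans _ mK) // ler_pM2r //; lra.
set a1 := (pi ^+ 2 * (x + m%:R) ^+ 2)^-1 in lo1 hi1 *.
set a2 := (pi ^+ 2 * (x - (m%:R + 1)) ^+ 2)^-1 in lo2 hi2 *.
set u1 := (K ^+ 2)^-1 * _ in lo1 hi1 *; set u2 := (K ^+ 2)^-1 * _ in lo2 hi2 *.
rewrite (_ : c / pi ^+ 2 * _ = c * (a1 + a2)); last by rewrite /a1 /a2 !invfM; ring.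
rewrite (_ : c / K ^+ 2 * _ = c * (u1 + u2)); last by rewrite /u1 /u2; ring.
rewrite (_ : 4 / K ^+ 2 = 2 * (2 / K ^+ 2)); last by ring.
have e_ge0 : 0 <= 2 / K ^+ 2 by rewrite divr_ge0 // ltW // exprn_gt0.
move: c01 => /andP[c_ge0 c_le1].
apply/andP; split; nra.
Qed.

Lemma psum_s_fn_window n x : 0 < x < 1 ->
  \sum_(m < 2 ^ n) s_fn m x <= 1 <= \sum_(m < 2 ^ n) s_fn m x + (2 ^+ n)^-1.
Proof.
move=> x01; have sumE := sum_csc2_pair n x01; rewrite mulr_sumr in sumE.
have bounds (m : 'I_(2 ^ n)) := s_fn_csc2_pair_bounds x01 (ltn_ord m).
apply/andP; split; first by rewrite -sumE; apply: ler_sum => m _; case/andP: (bounds m).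
rewrite -[X in X <= _]sumE.
apply: le_trans (_ : _ <= \sum_(m < 2 ^ n) (s_fn m x + 4 / (2 ^+ n.+1) ^+ 2)) _.
  by apply: ler_sum => m _; case/andP: (bounds m).
rewrite big_split /= sumr_const card_ord lerD2l.
rewrite -[_ *+ 2 ^ n]mulr_natr natrX (exprS _ n) (_ : 4 / _ * 2 ^+ n = (2 ^+ n)^-1) //.
by field; rewrite expf_neq0 // pnatr_eq0.
Qed.

Lemma psum_s_fn_le1 N x : 0 < x < 1 -> \sum_(0 <= m < N) s_fn m x <= 1.
Proof.
move=> x01; have /andP[+ _] := psum_s_fn_window N x01; apply: le_trans.
have N_le : (N <= 2 ^ N)%N by exact/ltnW/ltn_expl.
rewrite -(big_mkord xpredT (s_fn^~ x)) (big_cat_nat (leq0n N) N_le) /=.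
by rewrite lerDl sumr_ge0 // => m _; apply: s_fn_ge0.
Qed.

End PartialSumsNearOne.

Section ComparisonWithHalf.
Variable R : realType.
Implicit Types (x : R) (m : nat).

Lemma unit_interval_cases x : 0 <= x <= 1 -> (x = 0 \/ x = 1) \/ 0 < x < 1.
Proof.
case/andP=> x_ge0 x_le1; case: (ltrP 0 x) => [x_gt0|x_le0].
  case: (ltrP x 1) => [x_lt1|x_ge1]; first by right; apply/andP.
  by left; right; apply/eqP; rewrite eq_le x_le1.
by left; left; apply/eqP; rewrite eq_le x_le0.
Qed.

Lemma inv_sqr_pair_le (c k u : R) : 3 / 2 <= k -> `|u| < k ->
  c <= 1 - 4 / 3 * u ^+ 2 ->
  c * (((k + u) ^+ 2)^-1 + ((k - u) ^+ 2)^-1) <= 2 / k ^+ 2.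
Proof.
move=> k_ge uk hc; have k_gt0 : 0 < k by lra.
have /andP[u_gtN u_lt] : - k < u < k by rewrite -ltr_norml.
have kp_gt0 : 0 < k + u by lra.
have km_gt0 : 0 < k - u by lra.
have D_gt0 : 0 < (k + u) ^+ 2 * (k - u) ^+ 2 * k ^+ 2 by rewrite !mulr_gt0 // exprn_gt0.
rewrite -subr_ge0 (_ : _ - _ = (2 * (k + u) ^+ 2 * (k - u) ^+ 2
    - c * ((k - u) ^+ 2 + (k + u) ^+ 2) * k ^+ 2) / ((k + u) ^+ 2 * (k - u) ^+ 2 * k ^+ 2)).
  2: by field; rewrite !gt_eqF.
rewrite divr_ge0 ?(ltW D_gt0) // subr_ge0.
apply: (le_trans (y := (1 - 4 / 3 * u ^+ 2) * ((k - u) ^+ 2 + (k + u) ^+ 2) * k ^+ 2)).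
  by rewrite ler_wpM2r ?sqr_ge0 // ler_wpM2r // addr_ge0 ?sqr_ge0.
have k2 : 9 / 4 <= k ^+ 2.
  have : (3 / 2) ^+ 2 <= k ^+ 2 by rewrite ler_sqr ?nnegrE //; lra.
  by rewrite expr2; lra.
have u2_ge0 := sqr_ge0 u; have k2_ge0 := sqr_ge0 k.
have H1 : 0 <= u ^+ 2 * k ^+ 2 * (k ^+ 2 - 9 / 4).
  by apply: mulr_ge0; [exact: mulr_ge0 | lra].
have H2 := mulr_ge0 (mulr_ge0 u2_ge0 u2_ge0) k2_ge0.
have H3 := mulr_ge0 u2_ge0 u2_ge0.
move: H1 H2 H3; rewrite !expr2; nra.
Qed.

(* With [u = x - 1/2]:
   [sin^2 (pi x) = 1 - sin^2 (pi u) <= 1 - pi^2 u^2 (1 - pi^2 u^2 / 6)^2],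
   and [pi^2 (1 - pi^2 / 24)^2 >= 4/3] because [pi <= 4]. *)
Lemma sqr_sin_pi_le x : 0 < x < 1 -> sin (pi * x) ^+ 2 <= 1 - 4 / 3 * (x - 2^-1) ^+ 2.
Proof.
move=> /andP[x_gt0 x_lt1]; set u := x - 2^-1.
have pi_ge2 := pi_ge2 R; have pi_lt4 : pi < 4 :> R by have := pihalf_lt2 R; lra.
rewrite (_ : pi * x = pi * u + pi / 2); last by rewrite /u; field.
rewrite sinDpihalf cos2sin2 lerD2l lerN2.
have u_le : `|u| <= 2^-1 by rewrite ler_norml /u; apply/andP; split; lra.
have u2_le : `|pi * u| <= 2.
  by rewrite normrM (ger0_norm (pi_ge0 R)); have := normr_ge0 u; nra.
apply: le_trans (andP (sqr_sin_bounds u2_le)).1.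
rewrite exprMn; set P : R := pi ^+ 2.
have P_ge4 : 4 <= P by rewrite /P expr2; nra.
have P_le16 : P <= 16 by rewrite /P expr2; nra.
have uu : u ^+ 2 <= 4^-1.
  by rewrite -real_normK ?num_real // expr2; have := normr_ge0 u; nra.
set v := P * u ^+ 2.
have vP : v <= P / 4 by rewrite /v; have := sqr_ge0 u; nra.
have w_le : (1 - P / 24) ^+ 2 <= (1 - v / 6) ^+ 2 by rewrite ler_sqr ?nnegrE //; lra.
have key : 4 / 3 <= P * (1 - P / 24) ^+ 2.
  have : 0 <= (16 - P) * (192 - (16 - P) ^+ 2).
    by apply: mulr_ge0; [lra | rewrite subr_ge0 expr2; nra].
  rewrite !expr2; nra.
have key2 : 4 / 3 <= P * (1 - v / 6) ^+ 2.
  by apply: le_trans key _; rewrite ler_pM2l //; lra.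
rewrite (_ : v * (1 - v / 6) ^+ 2 = u ^+ 2 * (P * (1 - v / 6) ^+ 2)); last first.
  by rewrite {1}/v; ring.
by rewrite mulrC ler_wpM2l ?sqr_ge0.
Qed.

Lemma s_fn_le_half m x : (1 <= m)%N -> 0 <= x <= 1 -> s_fn m x <= s_fn m (2^-1).
Proof.
move=> m_ge1 /unit_interval_cases[x_end|x01].
  by rewrite s_fn_endpoint //; case: m m_ge1 => // m _; apply: s_fn_ge0.
have half01 : 0 < (2^-1 : R) < 1 by apply/andP; split; lra.
rewrite !s_fnE // sin_pihalf expr1n mul1r.
set k : R := m%:R + 2^-1; set u : R := x - 2^-1.
have m_ge1' : 1 <= (m%:R : R) by rewrite ler1n.
have k_ge : 3 / 2 <= k by rewrite /k; lra.
have uk : `|u| < k by rewrite ltr_norml /u /k; apply/andP; split; lra.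
rewrite (_ : x + m%:R = k + u); last by rewrite /k /u; field.
rewrite (_ : (x - (m%:R + 1)) ^+ 2 = (k - u) ^+ 2); last by rewrite /k /u; field.
rewrite (_ : 2^-1 + m%:R = k); last by rewrite /k; field.
rewrite (_ : (2^-1 - (m%:R + 1)) ^+ 2 = k ^+ 2); last by rewrite /k; field.
rewrite mulrAC [X in _ <= X]mulrC; apply: ler_wpM2r; first by rewrite invr_ge0 sqr_ge0.
by rewrite -mulr2n -mulr_natl inv_sqr_pair_le // sqr_sin_pi_le.
Qed.

End ComparisonWithHalf.

Section PartialSums.
Variable R : realType.
Implicit Types (x : R) (N n : nat).

Let half01 : 0 < (2^-1 : R) < 1. Proof. by apply/andP; split; lra. Qed.

Lemma psum_s_fn_endpoint N x : x = 0 \/ x = 1 -> (0 < N)%N ->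
  \sum_(0 <= m < N) s_fn m x = 1.
Proof.
move=> x_end; case: N => // N _.
rewrite big_nat_recl // s_fn_endpoint //= big1_seq ?addr0 // => m _.
by rewrite s_fn_endpoint.
Qed.

(* Both full sums are squeezed near 1, and beyond index 0 the tail at [1/2]
   dominates the tail at [x]. *)
Lemma psum_s_fn_half_le_add n N x : 0 < x < 1 -> (N <= 2 ^ n)%N ->
  \sum_(0 <= m < N) s_fn m (2^-1) <= \sum_(0 <= m < N) s_fn m x + (2 ^+ n)^-1.
Proof.
case: N => [|N] x01 N_le; first by rewrite !big_geq // add0r invr_ge0 exprn_ge0.
have /andP[_ window] := psum_s_fn_window n x01.
have le1 := psum_s_fn_le1 (2 ^ n) half01.
rewrite -(big_mkord xpredT (s_fn^~ x)) (big_cat_nat (leq0n _) N_le) /= in window.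
rewrite (big_cat_nat (leq0n _) N_le) /= in le1.
have tails : \sum_(N.+1 <= m < 2 ^ n) s_fn m x <= \sum_(N.+1 <= m < 2 ^ n) s_fn m (2^-1).
  apply: ler_sum_nat => m /andP[N_lt _]; apply: s_fn_le_half; first exact: leq_trans N_lt.
  by case/andP: x01 => *; apply/andP; split; apply: ltW.
lra.
Qed.

Lemma psum_s_fn_half_le N x : 0 <= x <= 1 ->
  \sum_(0 <= m < N) s_fn m (2^-1) <= \sum_(0 <= m < N) s_fn m x.
Proof.
case: N => [_|N]; first by rewrite !big_geq.
case/unit_interval_cases => [x_end|x01].
  by rewrite [X in _ <= X]psum_s_fn_endpoint // psum_s_fn_le1.
apply/ler_addgt0Pr => e e_gt0.
have [k k_gt] : exists k : nat, e^-1 < k%:R.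
  by exists (Num.bound e^-1); rewrite archi_boundP // invr_ge0 ltW.
have exp_ge n : (n <= 2 ^ n)%N by exact/ltnW/ltn_expl.
apply: le_trans (psum_s_fn_half_le_add (n := k + N.+1) x01 _) _.
  exact: leq_trans (leq_addl k N.+1) (exp_ge _).
rewrite lerD2l -[e]invrK lef_pV2 ?posrE ?invr_gt0 ?exprn_gt0 //.
apply: ltW (lt_le_trans k_gt _); rewrite -natrX ler_nat.
exact: leq_trans (leq_addr N.+1 k) (exp_ge _).
Qed.

End PartialSums.

Theorem mainTheorem7 (R : realType) (r x : R) :
  1 <= r -> 0 <= x <= 1 ->
  ((\sum_(0 <= k <oo) (powR (s_fn k (2^-1 : R)) r)%:E
      <= \sum_(0 <= k <oo) (powR (s_fn k x) r)%:E)%E)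
  /\ (forall m : nat, s_fn m (2^-1 : R) = 8 / (pi ^+ 2 * (2 * m%:R + 1) ^+ 2)).
Proof.
move=> r_ge1 x01; split; last exact: s_fn_half.
apply: lee_nneseries_psum => [n|n|N]; rewrite ?powR_ge0 //.
apply: ler_sum_powR_head => //.
- by move=> m; apply: s_fn_ge0.
- by move=> m; apply: s_fn_ge0.
- by move=> m m_ge1; apply: s_fn_le_half.
- by move=> m; apply: s_fn_half_le_head.
- exact: psum_s_fn_half_le.
Qed.
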